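(* A risk-sharing rule $\boldsymbol{C}$ on $\chi^n$ is the uniform RS rule if and only if it satisfies the reshuffling property and has source-anonymous contributions.
   Context: Fix a probability space $(\Omega,\mathcal{F},\mathbb{P})$ and an integer $n\ge 1$. Let $\chi$ be a convex cone of non-negative random variables on this space (closed under addition and under multiplication by positive scalars) with $0\in\chi$. All equalities between random variables are understood almost surely. A pool is a vector $\boldsymbol{X}=(X_1,\ldots,X_n)\in\chi^n$, with aggregate loss $S_{\boldsymbol{X}}=\sum_{i=1}^n X_i$. A risk-sharing (RS) rule is a mapping $\boldsymbol{C}$ assigning to every pool $\boldsymbol{X}\in\chi^n$ a vector $\boldsymbol{C}[\boldsymbol{X}]=(C_1[\boldsymbol{X}],\ldots,C_n[\boldsymbol{X}])$ of real-valued random variables satisfying $\sum_{i=1}^n C_i[\boldsymbol{X}]=S_{\boldsymbol{X}}$. The uniform RS rule is given by $C_i[\boldsymbol{X}]=S_{\boldsymbol{X}}/n$ for all $i$ and all pools $\boldsymbol{X}$. For a permutation $\pi$ of $\{1,\ldots,n\}$, the reshuffle of $\boldsymbol{X}$ is $\boldsymbol{X}^\pi=(X_{\pi(1)},\ldots,X_{\pi(n)})$. The rule satisfies the reshuffling property if $C_i[\boldsymbol{X}^\pi]=C_{\pi(i)}[\boldsymbol{X}]$ for every pool $\boldsymbol{X}$, every permutation $\pi$ and every $i$. It has source-anonymous contributions if $C_i[\boldsymbol{X}^\pi]=C_i[\boldsymbol{X}]$ for every pool $\boldsymbol{X}$, every permutation $\pi$ and every $i$. *)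

From HB Require Import structures.
From mathcomp Require Import all_boot all_order all_algebra all_fingroup.
From mathcomp Require Import all_classical all_reals all_analysis.
Set Implicit Arguments. Unset Strict Implicit. Unset Printing Implicit Defensive.
Import Order.TTheory GRing.Theory Num.Theory.
Local Open Scope classical_set_scope.
Local Open Scope ring_scope.

Section RS.
Context (d : measure_display) (T : measurableType d) (R : realType)
        (P : probability T R).

Definition as_eq (X Y : T -> R) : Prop := {ae P, forall w, X w = Y w}.

Definition nonneg_cone (chi : set (T -> R)) : Prop :=
  [/\ (forall X, chi X -> measurable_fun setT X /\ {ae P, forall w, 0 <= X w}),
      chi (fun _ => 0),
      (forall X Y, chi X -> chi Y -> chi (X \+ Y)) &
      (forall (c : R) X, 0 < c -> chi X -> chi (fun w => c * X w))].

Variable n : nat.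

Definition pool (chi : set (T -> R)) (X : 'I_n -> T -> R) : Prop :=
  forall i, chi (X i).

Definition aggregate (X : 'I_n -> T -> R) : T -> R :=
  fun w => \sum_(i < n) X i w.

Definition RS_rule (chi : set (T -> R))
    (C : ('I_n -> T -> R) -> 'I_n -> T -> R) : Prop :=
  forall X, pool chi X ->
    (forall i, measurable_fun setT (C X i)) /\
    as_eq (aggregate (C X)) (aggregate X).

Definition reshuffle (X : 'I_n -> T -> R) (pi : 'S_n) : 'I_n -> T -> R :=
  fun i => X (pi i).

Definition uniform_rule (chi : set (T -> R))
    (C : ('I_n -> T -> R) -> 'I_n -> T -> R) : Prop :=
  forall X, pool chi X -> forall i,
    as_eq (C X i) (fun w => aggregate X w / n%:R).

Definition reshuffling_property (chi : set (T -> R))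
    (C : ('I_n -> T -> R) -> 'I_n -> T -> R) : Prop :=
  forall X, pool chi X -> forall (pi : 'S_n) i,
    as_eq (C (reshuffle X pi) i) (C X (pi i)).

Definition source_anonymous (chi : set (T -> R))
    (C : ('I_n -> T -> R) -> 'I_n -> T -> R) : Prop :=
  forall X, pool chi X -> forall (pi : 'S_n) i,
    as_eq (C (reshuffle X pi) i) (C X i).

End RS.

From HB Require Import structures.
From mathcomp Require Import all_boot all_order all_algebra all_fingroup.
From mathcomp Require Import all_classical all_reals all_analysis.
Import Order.TTheory GRing.Theory Num.Theory.
Local Open Scope classical_set_scope.
Local Open Scope ring_scope.

(* The uniform rule depends on the pool only through the aggregate loss, which
   is invariant under reshuffling; this gives both properties. Conversely,
   reshuffling by the transposition (i j) and source-anonymity together give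
   C_i = C_j almost surely, and the full allocation constraint then forces
   every C_i to be S / n. *)

Lemma mean_of_constant_sum (F : numFieldType) (n : nat) (y s : F)
    (Y : 'I_n -> F) : (0 < n)%N ->
  (forall j, Y j = y) -> \sum_(j < n) Y j = s -> y = s / n%:R.
Proof.
move=> n_gt0 Yy <-; under eq_bigr => j _ do rewrite Yy.
by rewrite sumr_const card_ord -[_ *+ n]mulr_natr mulfK // pnatr_eq0 -lt0n.
Qed.

Section UniformRule.
Context (d : measure_display) (T : measurableType d) (R : realType)
        (P : probability T R) (n : nat) (chi : set (T -> R)).
Implicit Types (X : 'I_n -> T -> R) (pi : 'S_n).

Lemma pool_reshuffle X pi : pool chi X -> pool chi (reshuffle X pi).
Proof. by move=> poolX i; exact: poolX. Qed.

Lemma aggregate_reshuffle X pi : aggregate (reshuffle X pi) = aggregate X.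
Proof.
by apply/funext => w; rewrite /aggregate [RHS](reindex_inj (@perm_inj _ pi)).
Qed.

Variable C : ('I_n -> T -> R) -> 'I_n -> T -> R.

Lemma uniform_reshuffling : uniform_rule P chi C -> reshuffling_property P chi C.
Proof.
move=> unifC X poolX pi i; rewrite /as_eq.
apply: filterS2 (unifC _ (pool_reshuffle X pi poolX) i) (unifC X poolX (pi i)).
by move=> w -> ->; rewrite aggregate_reshuffle.
Qed.

Lemma uniform_source_anonymous : uniform_rule P chi C -> source_anonymous P chi C.
Proof.
move=> unifC X poolX pi i; rewrite /as_eq.
apply: filterS2 (unifC _ (pool_reshuffle X pi poolX) i) (unifC X poolX i).
by move=> w -> ->; rewrite aggregate_reshuffle.
Qed.

Lemma reshuffling_source_anonymous_equal_shares :
  reshuffling_property P chi C -> source_anonymous P chi C ->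
  forall X, pool chi X -> forall i,
  {ae P, forall w j, C X j w = C X i w}.
Proof.
move=> reshC anonC X poolX i; apply: filter_forall => j.
apply: filterS2 (reshC X poolX (tperm i j) i) (anonC X poolX (tperm i j) i).
by move=> w; rewrite tpermL => <- ->.
Qed.

Lemma equal_shares_uniform : (0 < n)%N -> RS_rule P chi C ->
  (forall X, pool chi X -> forall i, {ae P, forall w j, C X j w = C X i w}) ->
  uniform_rule P chi C.
Proof.
move=> n_gt0 rsC equalC X poolX i; rewrite /as_eq.
apply: filterS2 (equalC X poolX i) (proj2 (rsC X poolX)) => w Cw sumC.
exact: mean_of_constant_sum Cw sumC.
Qed.

End UniformRule.

Theorem theorem1 (d : measure_display) (T : measurableType d) (R : realType)
    (P : probability T R) (n : nat) (chi : set (T -> R))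
    (C : ('I_n -> T -> R) -> 'I_n -> T -> R) :
  (1 <= n)%N -> nonneg_cone P chi -> RS_rule P chi C ->
  (uniform_rule P chi C <->
   reshuffling_property P chi C /\ source_anonymous P chi C).
Proof.
move=> n_gt0 _ rsC; split.
- by move=> unifC; split; [exact: uniform_reshuffling | exact: uniform_source_anonymous].
- move=> [reshC anonC]; apply: equal_shares_uniform n_gt0 rsC _.
  exact: reshuffling_source_anonymous_equal_shares.
Qed.
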